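(* For every nonzero integer $m$, every $i\in\mathbb Z$, $k\in\frac12\mathbb Z$, $r\in\mathbb Z_{\ge0}$ and every integer $s>2r$, $$\sum_{p=0}^{s}(-1)^p\left[\begin{matrix}i+m\\ p\end{matrix}\right]_m\left[\begin{matrix}i+(r-p-2)m\\ r\end{matrix}\right]_m\left[\begin{matrix}i+(r-p+1)m\\ s-p\end{matrix}\right]_m=0$$ and $$\sum_{p=0}^{s}(-1)^p\left[\begin{matrix}k+\frac m2\\ p\end{matrix}\right]_m\left[\begin{matrix}k+(r-p-\frac32)m\\ r\end{matrix}\right]_m\left[\begin{matrix}k+(r-p+\frac12)m\\ s-p\end{matrix}\right]_m=0.$$
   Context: For $a,c$ in a field of characteristic zero and $r\in\mathbb Z_{\ge0}$: $\left[\begin{matrix}a\\ r\end{matrix}\right]_c=\frac{a(a-c)(a-2c)\cdots(a-(r-1)c)}{r!}$ ($=1$ if $r=0$). *)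

From mathcomp Require Import all_boot all_order all_algebra.
Set Implicit Arguments. Unset Strict Implicit. Unset Printing Implicit Defensive.
Import Order.TTheory GRing.Theory Num.Theory.
Local Open Scope ring_scope.

Definition gbinom (F : fieldType) (a c : F) (r : nat) : F :=
  (\prod_(j < r) (a - j%:R * c)) / (r`!)%:R.

From mathcomp Require Import all_boot all_order all_algebra.
From mathcomp Require Import ring.
Import Order.TTheory GRing.Theory Num.Theory.
Local Open Scope ring_scope.

(* Write T_p = (-1)^p [x; p]_c [x + (r - p) c; s - p]_c.  For r < s the sum of
   the T_p vanishes: for r = 0 the product of the two factors collapses to
   [x; s]_c C(s, p), and Pascal's rule for [.]_c lowers r by one.  A middle
   factor [z - p c; d]_c is a polynomial of degree d in p, and multiplying T_p
   by p amounts, through p [x; p]_c = x [x - c; p - 1]_c, to replacing (x, s)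
   by (x - c, s - 1) with r unchanged; by induction on d the weighted sum
   still vanishes when r + d < s.  The theorem is the case d = r, with c = m,
   x = i + m, z = i + (r - 2) m, resp. x = k + m/2, z = k + (r - 3/2) m. *)

Section GeneralizedBinomial.

Variable F : fieldType.
Implicit Types (a c x z : F) (n p r s d : nat).

Lemma gbinom0 a c : gbinom a c 0 = 1.
Proof. by rewrite /gbinom big_ord0 fact0 divr1. Qed.

Lemma gbinomS a c n :
  gbinom a c n.+1 = gbinom a c n * (a - n%:R * c) / n.+1%:R.
Proof. by rewrite /gbinom big_ord_recr /= factS natrM invfM; ring. Qed.

Lemma gbinomSl a c n : gbinom a c n.+1 = a * gbinom (a - c) c n / n.+1%:R.
Proof.
rewrite /gbinom big_ord_recl /= factS natrM invfM.
rewrite (eq_bigr (fun j : 'I_n => a - c - j%:R * c)); first by ring.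
by move=> j _; rewrite /bump /=; ring.
Qed.

Lemma alt_sum_binomial n : (0 < n)%N ->
  \sum_(p < n.+1) (-1) ^+ p * 'C(n, p)%:R = 0 :> F.
Proof.
move=> n_gt0; transitivity ((1 - 1 : F) ^+ n).
  by rewrite exprBn; apply: eq_bigr => p _; rewrite mulr_natr !expr1n !mulr1.
by rewrite subrr expr0n eqn0Ngt n_gt0.
Qed.

Hypothesis pcharF : [pchar F] =i pred0.

Lemma natf_neq0 n : (0 < n)%N -> n%:R != 0 :> F.
Proof. by rewrite lt0n (pcharf0P F).1. Qed.

Lemma gbinom_pascal a c n :
  gbinom a c n.+1 = gbinom (a - c) c n.+1 + c * gbinom (a - c) c n.
Proof. by rewrite gbinomSl gbinomS; field; rewrite nat1r natf_neq0. Qed.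

Lemma gbinom_mul_shift x c p n :
  gbinom x c p * gbinom (x - p%:R * c) c n = gbinom x c (p + n) * 'C(p + n, p)%:R.
Proof.
rewrite /gbinom big_split_ord /= -(bin_fact (leq_addr n p)) addKn !natrM.
rewrite [in RHS](eq_bigr (fun j : 'I_n => x - p%:R * c - j%:R * c)).
  by field; rewrite !natf_neq0 ?fact_gt0 ?bin_gt0 ?leq_addr.
by move=> j _; rewrite natrD; ring.
Qed.

Variable c : F.

Lemma alt_sum_gbinom_shift r : forall x s, (r < s)%N ->
  \sum_(p < s.+1) (-1) ^+ p * gbinom x c p
     * gbinom (x + r%:R * c - p%:R * c) c (s - p) = 0.
Proof.
elim: r => [|r IHr] x s lt_rs.
  under eq_bigr => p _ do
    rewrite mul0r addr0 -mulrA gbinom_mul_shift subnKC ?(leq_ord p) // mulrCA.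
  by rewrite -mulr_sumr alt_sum_binomial // mulr0.
case: s lt_rs => [|s] //; rewrite ltnS => lt_rs.
have shiftS p : x + r.+1%:R * c - p%:R * c - c = x + r%:R * c - p%:R * c
  by ring.
rewrite big_ord_recr /= subnn gbinom0.
under eq_bigr => p _ do
  rewrite subSn ?(leq_ord p) // gbinom_pascal shiftS mulrDr (mulrCA _ c).
rewrite big_split /= -mulr_sumr IHr // mulr0 addr0.
rewrite -[RHS](IHr x s.+1 (ltnW lt_rs)) [RHS]big_ord_recr /= subnn gbinom0.
by congr (_ + _); apply: eq_bigr => p _; rewrite subSn ?(leq_ord p).
Qed.

Definition alt_gbinom_term r d x z s p : F :=
  (-1) ^+ p * gbinom x c p * gbinom (z - p%:R * c) c d
    * gbinom (x + r%:R * c - p%:R * c) c (s - p).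

Lemma alt_gbinom_termS_deg r d x z s p :
  alt_gbinom_term r d.+1 x z s p =
  (alt_gbinom_term r d x z s p * (z - d%:R * c)
     - c * (p%:R * alt_gbinom_term r d x z s p)) / d.+1%:R.
Proof. by rewrite /alt_gbinom_term gbinomS; ring. Qed.

Lemma sum_nat_mul_alt_gbinom_term r d x z s :
  \sum_(p < s.+2) p%:R * alt_gbinom_term r d x z s.+1 p =
  - x * \sum_(p < s.+1) alt_gbinom_term r d (x - c) (z - c) s p.
Proof.
rewrite big_ord_recl mul0r add0r mulr_sumr; apply: eq_bigr => p _.
have shift1 y : y - p.+1%:R * c = y - c - p%:R * c by ring.
rewrite /alt_gbinom_term lift0 !shift1 (addrAC x) subSS exprS.
by rewrite gbinomSl; field; rewrite nat1r natf_neq0.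
Qed.

Lemma sum_alt_gbinom_term_eq0 r d : forall x z s, (r + d < s)%N ->
  \sum_(p < s.+1) alt_gbinom_term r d x z s p = 0.
Proof.
elim: d => [|d IHd] x z s lt_rds.
  under eq_bigr => p _ do rewrite /alt_gbinom_term gbinom0 mulr1.
  by apply: alt_sum_gbinom_shift; rewrite -(addn0 r).
under eq_bigr => p _ do rewrite alt_gbinom_termS_deg.
rewrite -mulr_suml sumrB -mulr_suml -mulr_sumr IHd ?mul0r ?sub0r; last first.
  by apply: leq_ltn_trans lt_rds; rewrite leq_add2l.
case: s lt_rds => [|s]; first by rewrite ltn0.
rewrite addnS ltnS => lt_rds.
by rewrite sum_nat_mul_alt_gbinom_term IHd // !mulr0 oppr0 mul0r.
Qed.

End GeneralizedBinomial.

Theorem mainTheorem2 (m : int) (hm : m != 0) (i kk : int) (r s : nat)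
    (hs : (2 * r < s)%N) :
  (\sum_(p < s.+1)
      (-1) ^+ p * gbinom ((i + m)%:~R : rat) m%:~R p
        * gbinom ((i + (r%:Z - p%:Z - 2) * m)%:~R : rat) m%:~R r
        * gbinom ((i + (r%:Z - p%:Z + 1) * m)%:~R : rat) m%:~R (s - p) = 0)
  /\
  (let k : rat := kk%:~R / 2 in
   let mq : rat := m%:~R in
   \sum_(p < s.+1)
      (-1) ^+ p * gbinom (k + mq / 2) mq p
        * gbinom (k + (r%:R - p%:R - 3 / 2) * mq) mq r
        * gbinom (k + (r%:R - p%:R + 1 / 2) * mq) mq (s - p) = 0).
Proof.
have lt_rrs : (r + r < s)%N by rewrite addnn -mul2n.
split.
  rewrite -[RHS](@sum_alt_gbinom_term_eq0 rat (pchar_num _) m%:~R r r (i + m)%:~R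
    (i + (r%:Z - 2) * m)%:~R _ lt_rrs).
  apply: eq_bigr => p _; rewrite /alt_gbinom_term.
  by congr (_ * gbinom _ _ _ * gbinom _ _ _); ring.
move=> k mq.
rewrite -[RHS](@sum_alt_gbinom_term_eq0 rat (pchar_num _) mq r r (k + mq / 2)
  (k + (r%:R - 3 / 2) * mq) _ lt_rrs).
apply: eq_bigr => p _; rewrite /alt_gbinom_term.
by congr (_ * gbinom _ _ _ * gbinom _ _ _); ring.
Qed.
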